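(* Let $\Sigma \subseteq \Sigma'$ be vocabularies and let $T$ and $T'$ be $\Sigma$-equivalent theories over $\Sigma$ and $\Sigma'$ respectively. Let $O'$ be an operator on four-valued $\Sigma'$-structures and define the operator $O$ on four-valued $\Sigma$-structures by $O(\tilde I) = O'(\tilde I + \bot_{\Sigma'\setminus\Sigma})|_{\Sigma}$. If $O'$ is a propagator for $T'$, then $O$ is a propagator for $T$. If $O'$ is monotone, then $O$ is monotone as well.
   Context: Vocabularies are finite sets of predicate symbols. Truth values $\mathbf{t},\mathbf{f},\mathbf{u},\mathbf{i}$ with precision order $\mathbf{u} \le_p \mathbf{t} \le_p \mathbf{i}$, $\mathbf{u} \le_p \mathbf{f} \le_p \mathbf{i}$ ($\mathbf{t},\mathbf{f}$ incomparable). A four-valued $\Sigma$-structure $\tilde I$ has domain $D$ and assigns to each $P/n\in\Sigma$ a function $P^{\tilde I}:D^n\to\{\mathbf{t},\mathbf{f},\mathbf{u},\mathbf{i}\}$; two-valued structures (only $\mathbf{t},\mathbf{f}$) are identified with ordinary structures. $\tilde I \le_p \tilde J$ (same domain) iff pointwise $\le_p$. $\tilde I|_{\Sigma_0}$ is the restriction to $\Sigma_0\subseteq\Sigma$. For disjoint vocabularies $\Sigma_1,\Sigma_2$ and structures $\tilde I$ over $\Sigma_1$, $\tilde J$ over $\Sigma_2$ with the same domain, $\tilde I+\tilde J$ is the $(\Sigma_1\cup\Sigma_2)$-structure restricting to $\tilde I$ and $\tilde J$. $\bot_{\Sigma_0}$ denotes the $\Sigma_0$-structure (with the relevant domain) assigning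 $\mathbf{u}$ to every domain atom. A propagator for a theory $T$ over $\Sigma$ is a map $O$ on four-valued $\Sigma$-structures with (i) $\tilde I\le_p O(\tilde I)$ and (ii) $O(\tilde I)\le_p M$ for every two-valued model $M$ of $T$ with $\tilde I\le_p M$. An operator $O$ is monotone if $\tilde I\le_p\tilde J$ implies $O(\tilde I)\le_p O(\tilde J)$. Theories $T$ over $\Sigma_1$ and $T'$ over $\Sigma_2$, with $\Sigma\subseteq\Sigma_1\cap\Sigma_2$, are $\Sigma$-equivalent if for every two-valued $\Sigma$-structure $I$, $I$ has an expansion to $\Sigma_1$ satisfying $T$ iff $I$ has an expansion to $\Sigma_2$ satisfying $T'$. *)

From mathcomp Require Import all_boot finmap.
Unset Printing Implicit Defensive.
Local Open Scope fset_scope.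

Inductive FV := Ft | Ff | Fu | Fi.

Definition leq_p (a b : FV) : bool :=
  match a, b with
  | Fu, _ => true
  | Ft, Ft | Ft, Fi => true
  | Ff, Ff | Ff, Fi => true
  | Fi, Fi => true
  | _, _ => false
  end.

Section Structures.
Variables (Sym : choiceType) (ar : Sym -> nat).

Definition struct4 (S : {fset Sym}) (D : Type) :=
  forall P : Sym, P \in S -> (ar P).-tuple D -> FV.
Definition struct2 (S : {fset Sym}) (D : Type) :=
  forall P : Sym, P \in S -> (ar P).-tuple D -> bool.

Definition emb2 S D (M : struct2 S D) : struct4 S D :=
  fun P h t => if M P h t then Ft else Ff.

Definition le_p S D (I J : struct4 S D) : Prop :=
  forall P (h : P \in S) t, leq_p (I P h t) (J P h t).

Definition restrict4 S0 S (H : S0 `<=` S) D (I : struct4 S D) : struct4 S0 D :=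
  fun P h => I P (@fsubsetP _ S0 S H P h).
Definition restrict2 S0 S (H : S0 `<=` S) D (M : struct2 S D) : struct2 S0 D :=
  fun P h => M P (@fsubsetP _ S0 S H P h).

Definition bot4 S D : struct4 S D := fun _ _ _ => Fu.

Lemma in_fsetU_r (S1 S2 : {fset Sym}) P :
  P \in S1 `|` S2 -> (P \in S1) = false -> P \in S2.
Proof. by rewrite in_fsetU => /orP [-> //|]. Qed.

(* I + J : the (S1 u S2)-structure restricting to I on S1 and to J on S2
   (intended for disjoint S1, S2). *)
Definition plus4 S1 S2 D (I : struct4 S1 D) (J : struct4 S2 D)
  : struct4 (S1 `|` S2) D :=
  fun P h =>
    (if P \in S1 as b return (P \in S1) = b -> (ar P).-tuple D -> FV
     then fun e => I P e
     else fun e => J P (in_fsetU_r S1 S2 P h e)) erefl.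

Lemma fsubset_USD (S S' : {fset Sym}) : S' `<=` S `|` (S' `\` S).
Proof.
apply/fsubsetP => P hP; rewrite in_fsetU in_fsetD hP andbT.
by case: (P \in S).
Qed.

(* A theory over S, represented by its class of two-valued models
   (over arbitrary domains). *)
Definition theory (S : {fset Sym}) := forall D : Type, struct2 S D -> Prop.

Definition expands S S1 (H : S `<=` S1) D (I : struct2 S D) (M : struct2 S1 D)
  : Prop := forall P (h : P \in S) t, restrict2 S S1 H D M P h t = I P h t.

Definition sigma_equiv S S1 S2 (H1 : S `<=` S1) (H2 : S `<=` S2)
  (T : theory S1) (T' : theory S2) : Prop :=
  forall (D : Type) (I : struct2 S D),
    (exists M : struct2 S1 D, expands S S1 H1 D I M /\ T D M) <->
    (exists M' : struct2 S2 D, expands S S2 H2 D I M' /\ T' D M').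

Definition operator S := forall D : Type, struct4 S D -> struct4 S D.

Definition is_propagator S (T : theory S) (O : operator S) : Prop :=
  forall (D : Type) (I : struct4 S D),
    le_p S D I (O D I) /\
    (forall M : struct2 S D, T D M -> le_p S D I (emb2 S D M) -> le_p S D (O D I) (emb2 S D M)).

Definition monotone_op S (O : operator S) : Prop :=
  forall (D : Type) (I J : struct4 S D), le_p S D I J -> le_p S D (O D I) (O D J).

(* O(I) = O'(I + bot_{S' \ S})|_S. *)
Definition induced_op S S' (H : S `<=` S') (O' : operator S') : operator S :=
  fun D I =>
    restrict4 S S' H D
      (O' D (restrict4 S' (S `|` (S' `\` S)) (fsubset_USD S S') D
               (plus4 S (S' `\` S) D I (bot4 (S' `\` S) D)))).

End Structures.

Arguments emb2 {Sym ar S D} M.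
Arguments le_p {Sym ar S D} I J.
Arguments restrict4 {Sym ar S0 S} H {D} I.
Arguments restrict2 {Sym ar S0 S} H {D} M.
Arguments bot4 {Sym ar} S D.
Arguments plus4 {Sym ar S1 S2 D} I J.
Arguments theory {Sym} ar S.
Arguments expands {Sym ar S S1} H {D} I M.
Arguments sigma_equiv {Sym ar S S1 S2} H1 H2 T T'.
Arguments operator {Sym} ar S.
Arguments is_propagator {Sym ar S} T O.
Arguments monotone_op {Sym ar S} O.
Arguments induced_op {Sym ar S S'} H O'.

From mathcomp Require Import all_boot finmap.
Local Open Scope fset_scope.

(* Extending a Sigma-structure by u on the symbols of Sigma' \ Sigma is
   monotone and restricts back to the structure itself. A two-valued model M
   of T above I expands, by Sigma-equivalence, to a model M' of T'; as u lies
   below every truth value, M' is above the extension of I, so O' keeps the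
   extension below M', and restricting to Sigma gives O(I) <= M. *)

Section Extension.
Variables (Sym : choiceType) (ar : Sym -> nat) (S S' : {fset Sym}) (D : Type).

Definition extend_bot (I : struct4 Sym ar S D) : struct4 Sym ar S' D :=
  restrict4 (fsubset_USD _ S S') (plus4 I (bot4 (S' `\` S) D)).

Lemma extend_bot_in (I : struct4 Sym ar S D) P (hS : P \in S) h t :
  extend_bot I P h t = I P hS t.
Proof.
rewrite /extend_bot /restrict4 /plus4; move: (fsubsetP _ _ _) => hU.
move: (erefl (P \in S)); case: {2 3}(P \in S) => /= e; last by have := hS; rewrite e.
by rewrite (bool_irrelevance e hS).
Qed.

Lemma extend_bot_notin (I : struct4 Sym ar S D) P (hS : P \notin S) h t :
  extend_bot I P h t = Fu.
Proof.
rewrite /extend_bot /restrict4 /plus4; move: (fsubsetP _ _ _) => hU.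
move: (erefl (P \in S)); case: {2 3}(P \in S) => /= e //.
by move: hS; rewrite e.
Qed.

Lemma le_p_extend_bot (I J : struct4 Sym ar S D) :
  le_p I J -> le_p (extend_bot I) (extend_bot J).
Proof.
move=> IJ P h t; case: (boolP (P \in S)) => hS.
  by rewrite !(extend_bot_in _ _ hS); apply: IJ.
by rewrite !extend_bot_notin.
Qed.

Lemma extend_bot_le_p_emb2 (HS : S `<=` S') (I : struct4 Sym ar S D)
    (M : struct2 Sym ar S D) (M' : struct2 Sym ar S' D) :
  expands HS M M' -> le_p I (emb2 M) -> le_p (extend_bot I) (emb2 M').
Proof.
move=> EM IM P h t; case: (boolP (P \in S)) => hS; last first.
  by rewrite extend_bot_notin.
rewrite (extend_bot_in _ _ hS); have := IM P hS t.
by rewrite /emb2 -(EM P hS t) /restrict2 (bool_irrelevance (fsubsetP HS P hS) h).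
Qed.

Lemma le_p_restrict_extend_bot (HS : S `<=` S') (I : struct4 Sym ar S D)
    (J : struct4 Sym ar S' D) :
  le_p (extend_bot I) J -> le_p I (restrict4 HS J).
Proof.
by move=> IJ P h t; rewrite -(extend_bot_in I P h (fsubsetP HS P h)); apply: IJ.
Qed.

End Extension.

Arguments extend_bot {Sym ar S} S' {D} I.
Arguments extend_bot_le_p_emb2 {Sym ar S S' D HS I M M'}.
Arguments le_p_restrict_extend_bot {Sym ar S S' D} HS {I J}.

Lemma le_p_restrict {Sym : choiceType} {ar : Sym -> nat} {S0 S : {fset Sym}}
    (H : S0 `<=` S) {D : Type} {I J : struct4 Sym ar S D} :
  le_p I J -> le_p (restrict4 H I) (restrict4 H J).
Proof. by move=> IJ P h t; apply: IJ. Qed.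

Lemma le_p_restrict_emb2 {Sym : choiceType} {ar : Sym -> nat} {S0 S : {fset Sym}}
    {H : S0 `<=` S} {D : Type} {J : struct4 Sym ar S D}
    {M : struct2 Sym ar S0 D} {M' : struct2 Sym ar S D} :
  expands H M M' -> le_p J (emb2 M') -> le_p (restrict4 H J) (emb2 M).
Proof. by move=> EM JM P h t; rewrite /emb2 -(EM P h t); apply: JM. Qed.

Lemma expands_refl {Sym : choiceType} {ar : Sym -> nat} {S : {fset Sym}}
    {D : Type} (M : struct2 Sym ar S D) :
  expands (fsubset_refl S) M M.
Proof.
by move=> P h t; rewrite /restrict2 (bool_irrelevance (fsubsetP _ P h) h).
Qed.

Lemma sigma_equiv_model_expands {Sym : choiceType} {ar : Sym -> nat}
    {S S' : {fset Sym}} {HS : S `<=` S'} {T : theory ar S} {T' : theory ar S'}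
    (Heq : sigma_equiv (fsubset_refl S) HS T T') {D : Type}
    {M : struct2 Sym ar S D} :
  T D M -> exists M' : struct2 Sym ar S' D, expands HS M M' /\ T' D M'.
Proof. by move=> TM; apply/Heq; exists M; split=> //; apply: expands_refl. Qed.

Section InducedOperator.
Variables (Sym : choiceType) (ar : Sym -> nat) (S S' : {fset Sym})
  (HS : S `<=` S') (O' : operator ar S').

Lemma induced_opE D (I : struct4 Sym ar S D) :
  induced_op HS O' D I = restrict4 HS (O' D (extend_bot S' I)).
Proof. by []. Qed.

Lemma induced_op_propagator (T : theory ar S) (T' : theory ar S') :
  sigma_equiv (fsubset_refl S) HS T T' ->
  is_propagator T' O' -> is_propagator T (induced_op HS O').
Proof.
move=> Heq HO' D I; have [O'_ext O'_sound] := HO' D (extend_bot S' I).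
split; first by rewrite induced_opE; exact: le_p_restrict_extend_bot O'_ext.
move=> M TM IM; have [M' [EM' TM']] := sigma_equiv_model_expands Heq TM.
rewrite induced_opE; apply: (le_p_restrict_emb2 EM'); apply: O'_sound => //.
exact: extend_bot_le_p_emb2 EM' IM.
Qed.

Lemma induced_op_monotone :
  monotone_op O' -> monotone_op (induced_op HS O').
Proof.
move=> HO' D I J IJ; rewrite !induced_opE.
by apply/le_p_restrict/HO'/le_p_extend_bot.
Qed.

End InducedOperator.

Theorem proposition3p3 (Sym : choiceType) (ar : Sym -> nat)
    (S S' : {fset Sym}) (HS : S `<=` S')
    (T : theory ar S) (T' : theory ar S')
    (Heq : sigma_equiv (fsubset_refl S) HS T T')
    (O' : operator ar S') :
  (is_propagator T' O' -> is_propagator T (induced_op HS O')) /\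
  (monotone_op O' -> monotone_op (induced_op HS O')).
Proof.
split; [exact: induced_op_propagator | exact: induced_op_monotone].
Qed.
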